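(* Consider Setting A with all nodes running Algorithm 1 (any graph sequence, any gains). Fix a sub-state $j$, a node $i\in\mathcal V\setminus\{j\}$ and a time $k$ such that $\tau^{(j)}_i[k]=m$ with $m\in\mathbb N_+$. Then there exist nodes $v(\tau)\in\mathcal V\setminus\{j\}$, $\tau\in\{k-m+1,\dots,k\}$ (with $v(k)=i$), such that $$\hat z^{(j)}_i[k]=A_{jj}^{m}\,\hat z^{(j)}_j[k-m]+\sum_{q=1}^{j-1}\sum_{\tau=k-m}^{k-1}A_{jj}^{\,k-\tau-1}A_{jq}\,\hat z^{(q)}_{v(\tau+1)}[\tau].$$
   Context: Setting A. Consider the discrete-time LTI system $x[k+1]=Ax[k]$, $k\in\mathbb N$, with $A\in\mathbb R^{n\times n}$, monitored by $N$ nodes $\mathcal V=\{1,\dots,N\}$; node $i$ measures $y_i[k]=C_ix[k]$ with $C_i\in\mathbb R^{r_i\times n}$. Let $C=[C_1^T\ \cdots\ C_N^T]^T$ and assume $(A,C)$ is observable. Fix an invertible $T$ such that $\bar A=T^{-1}AT$ is block lower-triangular with diagonal blocks $A_{11},\dots,A_{NN}$ and off-diagonal blocks $A_{jq}$ ($q<j$), zero blocks above the diagonal, and $C_iT=[C_{i1}\ \cdots\ C_{ii}\ 0\ \cdots\ 0]$ for each $i$, with $(A_{jj},C_{jj})$ observable for every $j$ (such $T$ exists). With $z[k]=T^{-1}x[k]$ partitioned compatibly into sub-states $z^{(1)}[k],\dots,z^{(N)}[k]$, one has $z^{(j)}[k+1]=A_{jj}z^{(j)}[k]+\sum_{q=1}^{j-1}A_{jq}z^{(q)}[k]$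 and $y_j[k]=\sum_{q=1}^{j}C_{jq}z^{(q)}[k]$. Node $j$ is called the source node of sub-state $j$. Communication: at each time $k$ there is a directed graph $\mathcal G[k]=(\mathcal V,\mathcal E[k])$; $(l,i)\in\mathcal E[k]$ means $l$ can send to $i$ at time $k$; $\mathcal N_i[k]=\{l\neq i:(l,i)\in\mathcal E[k]\}$. The union graph over $[k_1,k_2]$ has vertex set $\mathcal V$ and edge set $\bigcup_{\tau=k_1}^{k_2}\mathcal E[\tau]$. Algorithm 1 (run for every sub-state $j$ simultaneously). Each node $i$ keeps an estimate $\hat z^{(j)}_i[k]$ (arbitrary initial value) and a freshness index $\tau^{(j)}_i[k]\in\mathbb N\cup\{\omega\}$, where $\omega$ is a special symbol; initially $\tau^{(j)}_j[0]=0$ and $\tau^{(j)}_i[0]=\omega$ for $i\ne j$. Source node $j$: $\tau^{(j)}_j[k]=0$ for all $k$, and $\hat z^{(j)}_j[k+1]=(A_{jj}-L_jC_{jj})\hat z^{(j)}_j[k]+\sum_{q=1}^{j-1}(A_{jq}-L_jC_{jq})\hat z^{(q)}_j[k]+L_jy_j[k]$, where $L_j$ is an observer gain. Non-source node $i\neq j$ at time $k$: let $\mathcal M^{(j)}_i[k]=\{l\in\mathcal N_i[k]:\tau^{(j)}_l[k]\neq\omega\}$; if $\tau^{(j)}_i[k]=\omega$ let $\mathcal F^{(j)}_i[k]=\mathcal M^{(j)}_i[k]$, otherwise $\mathcal F^{(j)}_i[k]=\{l\in\mathcal M^{(j)}_i[k]:\tau^{(j)}_l[k]<\tau^{(j)}_i[k]\}$.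 If $\mathcal F^{(j)}_i[k]\ne\emptyset$, pick $u\in\arg\min_{l\in\mathcal F^{(j)}_i[k]}\tau^{(j)}_l[k]$ and set $\tau^{(j)}_i[k+1]=\tau^{(j)}_u[k]+1$ and $\hat z^{(j)}_i[k+1]=A_{jj}\hat z^{(j)}_u[k]+\sum_{q=1}^{j-1}A_{jq}\hat z^{(q)}_i[k]$ (''$i$ adopts the information of $u$ at time $k$''). If $\mathcal F^{(j)}_i[k]=\emptyset$, set $\tau^{(j)}_i[k+1]=\omega$ if $\tau^{(j)}_i[k]=\omega$ and $\tau^{(j)}_i[k+1]=\tau^{(j)}_i[k]+1$ otherwise, and $\hat z^{(j)}_i[k+1]=A_{jj}\hat z^{(j)}_i[k]+\sum_{q=1}^{j-1}A_{jq}\hat z^{(q)}_i[k]$ (''$i$ adopts its own information''). *)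

From HB Require Import structures.
From mathcomp Require Import all_boot all_order all_algebra.
Set Implicit Arguments. Unset Strict Implicit. Unset Printing Implicit Defensive.
Import Order.TTheory GRing.Theory Num.Theory.
Local Open Scope ring_scope.

Definition observable (R : fieldType) (n p : nat)
  (A : 'M[R]_n) (C : 'M[R]_(p, n)) : bool :=
  \rank (\mxcol_(k < n) (C *m A ^+ k)) == n.

(* Freshness indices: [None] is the special symbol omega. *)
Definition freshness := option nat.

Definition fsucc (t : freshness) : freshness := omap S t.

Definition inF (N : nat) (E : nat -> rel 'I_N)
  (tau : 'I_N -> nat -> freshness) (i : 'I_N) (k : nat) (l : 'I_N) : bool :=
  [&& l != i, E k l i &
     match tau l k, tau i k with
     | Some a, None => true
     | Some a, Some b => (a < b)%N
     | None, _ => false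
     end].

Definition lower_sum (R : ringType) (N : nat) (d : 'I_N -> nat)
  (Ab : forall j q : 'I_N, 'M[R]_(d j, d q))
  (zhat : forall q : 'I_N, 'I_N -> nat -> 'cV[R]_(d q))
  (j i : 'I_N) (k : nat) : 'cV[R]_(d j) :=
  \sum_(q < N | (q < j)%N) Ab j q *m zhat q i k.

(* [alg1_run ... tau zhat] : (tau, zhat) is a run of Algorithm 1, executed for
   every sub-state j simultaneously, for the graph sequence E (E k l i means
   that l can send to i at time k), with gains L and measurements y.
   tau j i k = tau^{(j)}_i[k], zhat j i k = \hat z^{(j)}_i[k].
   Initial estimates are arbitrary; ties in the argmin are broken arbitrarily. *)
Definition alg1_run (R : ringType) (N : nat) (d r : 'I_N -> nat)
  (Ab : forall j q : 'I_N, 'M[R]_(d j, d q))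
  (Cb : forall i q : 'I_N, 'M[R]_(r i, d q))
  (L : forall j : 'I_N, 'M[R]_(d j, r j))
  (y : forall i : 'I_N, nat -> 'cV[R]_(r i))
  (E : nat -> rel 'I_N)
  (tau : 'I_N -> 'I_N -> nat -> freshness)
  (zhat : forall q : 'I_N, 'I_N -> nat -> 'cV[R]_(d q)) : Prop :=
  (forall j i : 'I_N, i != j -> tau j i 0%N = None) /\
  (forall (j : 'I_N) (k : nat), tau j j k = Some 0%N) /\
  (forall (j : 'I_N) (k : nat),
     zhat j j k.+1 =
       (Ab j j - L j *m Cb j j) *m zhat j j k
       + \sum_(q < N | (q < j)%N) (Ab j q - L j *m Cb j q) *m zhat q j k
       + L j *m y j k) /\
  (forall (j i : 'I_N) (k : nat), i != j ->
     ((exists l, inF E (tau j) i k l) ->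
        exists u tu, [/\ inF E (tau j) i k u, tau j u k = Some tu,
          (forall l t, inF E (tau j) i k l -> tau j l k = Some t -> (tu <= t)%N),
          tau j i k.+1 = Some tu.+1 &
          zhat j i k.+1 = Ab j j *m zhat j u k + lower_sum Ab zhat j i k]) /\
     ((forall l, ~~ inF E (tau j) i k l) ->
        tau j i k.+1 = fsucc (tau j i k) /\
        zhat j i k.+1 = Ab j j *m zhat j i k + lower_sum Ab zhat j i k)).

From HB Require Import structures.
From mathcomp Require Import all_boot all_order all_algebra.
Import Order.TTheory GRing.Theory Num.Theory.
Set Implicit Arguments.
Unset Strict Implicit.
Unset Printing Implicit Defensive.
Local Open Scope ring_scope.

(* Every non-source update has the shape  zhat_i[k+1] = A_jj zhat_u[k] + lower terms,
   where u is the node whose information i adopts (u = i when it keeps its own) and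
   tau_i[k+1] = tau_u[k] + 1.  Following the chain of adopted nodes backwards from i
   until it reaches the source j, which happens after exactly tau_i[k] steps, and
   unrolling the recursion along it gives the formula; v records the chain. *)

Section Unrolled.

Variables (R : nzRingType) (N : nat) (d : 'I_N -> nat).
Variable Ab : forall j q : 'I_N, 'M[R]_(d j, d q).
Variable zhat : forall q : 'I_N, 'I_N -> nat -> 'cV[R]_(d q).
Variable j : 'I_N.

Definition unrolled_estimate (v : nat -> 'I_N) (k m : nat) : 'cV[R]_(d j) :=
  Ab j j ^+ m *m zhat j j (k - m)%N
  + \sum_(q < N | (q < j)%N)
      \sum_(k - m <= t < k) Ab j j ^+ (k - t - 1) *m Ab j q *m zhat q (v t.+1) t.

Lemma unrolled_estimate0 (v : nat -> 'I_N) (k : nat) :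
  unrolled_estimate v k 0 = zhat j j k.
Proof.
rewrite /unrolled_estimate subn0 expr0 mul1mx big1 ?addr0 // => q _.
by rewrite big_geq.
Qed.

Lemma eq_unrolled_estimate (v v' : nat -> 'I_N) (k m : nat) :
  (forall t, (k - m < t <= k)%N -> v t = v' t) ->
  unrolled_estimate v k m = unrolled_estimate v' k m.
Proof.
move=> eq_vv'; congr (_ + _); apply: eq_bigr => q _.
by apply: eq_big_nat => t /andP[lo hi]; rewrite eq_vv' // ltnS lo hi.
Qed.

Lemma unrolled_estimateS (v : nat -> 'I_N) (k m : nat) :
  Ab j j *m unrolled_estimate v k m + lower_sum Ab zhat j (v k.+1) k
  = unrolled_estimate v k.+1 m.+1.
Proof.
have mulA_pow n : Ab j j *m Ab j j ^+ n = Ab j j ^+ n.+1 by rewrite exprS mulmxE.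
rewrite /unrolled_estimate subSS mulmxDr mulmxA mulA_pow -addrA; congr (_ + _).
rewrite /lower_sum mulmx_sumr -big_split /=; apply: eq_bigr => q _.
rewrite [in RHS]big_nat_recr ?leq_subr //= mulmx_sumr; congr (_ + _).
  apply: eq_big_nat => t /andP[_ ltk].
  by rewrite !mulmxA mulA_pow -[in RHS]subnDA addn1 subSS subn1 prednK ?subn_gt0.
by rewrite subSnn subnn expr0 mul1mx.
Qed.

Definition unrolls_along_chain (i : 'I_N) (k m : nat) : Prop :=
  exists v : nat -> 'I_N,
    [/\ forall t, (k - m < t <= k)%N -> v t != j,
        v k = i & zhat j i k = unrolled_estimate v k m].

Lemma unrolls_along_chain_source (k : nat) : unrolls_along_chain j k 0.
Proof.
exists (fun=> j); split=> // [t|]; last by rewrite unrolled_estimate0.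
by rewrite subn0 => /andP[/ltn_geF->].
Qed.

Lemma unrolls_along_chain_adopt (i u : 'I_N) (k m : nat) :
  i != j -> unrolls_along_chain u k m ->
  zhat j i k.+1 = Ab j j *m zhat j u k + lower_sum Ab zhat j i k ->
  unrolls_along_chain i k.+1 m.+1.
Proof.
move=> neq_ij [v [v_neq_j _ zhat_u]] zhat_i.
pose v' t := if t == k.+1 then i else v t.
have v'_old t : (k - m < t <= k)%N -> v' t = v t.
  by move=> /andP[_ le_tk]; rewrite /v' ltn_eqF.
exists v'; split.
- move=> t /andP[lo hi]; rewrite /v'; have [// | neq_t] := eqVneq t k.+1.
  by apply: v_neq_j; rewrite -subSS lo -ltnS ltn_neqAle neq_t.
- by rewrite /v' eqxx.
- rewrite zhat_i zhat_u -(eq_unrolled_estimate v'_old) -unrolled_estimateS.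
  by rewrite /v' eqxx.
Qed.

End Unrolled.

Section Algorithm1.

Variables (R : nzRingType) (N : nat) (d r : 'I_N -> nat).
Variable Ab : forall j q : 'I_N, 'M[R]_(d j, d q).
Variable Cb : forall i q : 'I_N, 'M[R]_(r i, d q).
Variable L : forall j : 'I_N, 'M[R]_(d j, r j).
Variable y : forall i : 'I_N, nat -> 'cV[R]_(r i).
Variable E : nat -> rel 'I_N.
Variable tau : 'I_N -> 'I_N -> nat -> freshness.
Variable zhat : forall q : 'I_N, 'I_N -> nat -> 'cV[R]_(d q).
Hypothesis hrun : alg1_run Ab Cb L y E tau zhat.

Lemma alg1_adopt (j i : 'I_N) (k m : nat) :
  i != j -> tau j i k.+1 = Some m ->
  exists u m', [/\ m = m'.+1, tau j u k = Some m' &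
    zhat j i k.+1 = Ab j j *m zhat j u k + lower_sum Ab zhat j i k].
Proof.
case: hrun => _ [_ [_ nonsource]] neq_ij tau_ik1.
have [adopt_other keep_own] := nonsource j i k neq_ij.
have [/existsP[l inF_l] | noF] := boolP [exists l, inF E (tau j) i k l].
  have [u [tu [_ tau_u _ tau_i' zhat_i']]] := adopt_other (ex_intro _ l inF_l).
  by exists u, tu; split=> //; move: tau_ik1; rewrite tau_i' => -[<-].
have [tau_i' zhat_i'] : tau j i k.+1 = fsucc (tau j i k) /\
    zhat j i k.+1 = Ab j j *m zhat j i k + lower_sum Ab zhat j i k.
  by apply: keep_own => l; apply: contra noF => inF_l; apply/existsP; exists l.
move: tau_ik1; rewrite tau_i'; case tau_i: (tau j i k) => [t|] //= [<-].
by exists i, t.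
Qed.

Lemma alg1_unrolls_along_chain (j i : 'I_N) (k m : nat) :
  tau j i k = Some m -> unrolls_along_chain Ab zhat j i k m.
Proof.
have [init [source _]] := hrun.
elim: k i m => [|k IHk] i m; have [-> | neq_ij] := eqVneq i j;
  try by rewrite source => -[<-]; apply: unrolls_along_chain_source.
  by rewrite init.
move=> tau_ik.
have [u [m' [-> tau_uk zhat_i]]] := alg1_adopt neq_ij tau_ik.
exact: unrolls_along_chain_adopt neq_ij (IHk u m' tau_uk) zhat_i.
Qed.

End Algorithm1.

Theorem lemma3 (R : realFieldType) (N : nat) (d r : 'I_N -> nat)
  (A : 'M[R]_(\sum_(i < N) d i))
  (Cm : forall i : 'I_N, 'M[R]_(r i, \sum_(i < N) d i))
  (T : 'M[R]_(\sum_(i < N) d i))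
  (Ab : forall j q : 'I_N, 'M[R]_(d j, d q))
  (Cb : forall i q : 'I_N, 'M[R]_(r i, d q))
  (L : forall j : 'I_N, 'M[R]_(d j, r j))
  (x : nat -> 'cV[R]_(\sum_(i < N) d i))
  (E : nat -> rel 'I_N)
  (tau : 'I_N -> 'I_N -> nat -> freshness)
  (zhat : forall q : 'I_N, 'I_N -> nat -> 'cV[R]_(d q))
  (* Setting A *)
  (hobs : observable A (\mxcol_(i < N) Cm i))
  (hT : T \in unitmx)
  (hAbar : invmx T *m A *m T = \mxblock_(j < N, q < N) Ab j q)
  (hupper : forall j q : 'I_N, (j < q)%N -> Ab j q = 0)
  (hC : forall i : 'I_N, Cm i *m T = \mxrow_(q < N) Cb i q)
  (hCzero : forall i q : 'I_N, (i < q)%N -> Cb i q = 0)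
  (hobsj : forall j : 'I_N, observable (Ab j j) (Cb j j))
  (hx : forall k, x k.+1 = A *m x k)
  (* all nodes run Algorithm 1, y_i[k] = C_i x[k] *)
  (hrun : alg1_run Ab Cb L (fun i k => Cm i *m x k) E tau zhat)
  (j i : 'I_N) (k m : nat) (hij : i != j) (hm : (0 < m)%N)
  (htau : tau j i k = Some m) :
  exists v : nat -> 'I_N,
    [/\ forall t, (k - m + 1 <= t <= k)%N -> v t != j,
        v k = i &
        zhat j i k =
          Ab j j ^+ m *m zhat j j (k - m)%N
          + \sum_(q < N | (q < j)%N)
              \sum_(k - m <= t < k) Ab j j ^+ (k - t - 1) *m Ab j q *m zhat q (v t.+1) t].
Proof.
have [v [v_neq_j v_k zhat_i]] := alg1_unrolls_along_chain hrun htau.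
by exists v; split=> // t; rewrite addn1; apply: v_neq_j.
Qed.
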